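(* Let $\Pi$ be a safety problem. If $\Pi$ has a proof in the incremental forward-backward proof system with prophecy $\mathbf{FBPI}$, then $\Pi$ is safe.
   Context: A first-order vocabulary $\Sigma$ consists of constant, function and relation symbols; $\Sigma'=\{a' : a\in\Sigma\}$ is a disjoint copy, and for a formula $\varphi$, $\varphi'$ denotes $\varphi$ with every vocabulary symbol replaced by its primed copy. A state is a first-order structure over the vocabulary. A safety problem over $\Sigma$ is a triple $(\iota,\tau,\beta)$, where $\iota$ (initial states) and $\beta$ (bad states) are closed formulas over $\Sigma$ and $\tau$ (transitions) is a closed formula over $\Sigma\uplus\Sigma'$. A pair of states $(s,t)$ over a common domain is a transition if the structure interpreting unprimed symbols as in $s$ and primed ones as in $t$ satisfies $\tau$. A trace is a finite sequence of states over a common domain whose consecutive states form transitions; the problem is safe if there is no trace $s_0,\dots,s_k$ with $s_0\models\iota$, $s_k\models\beta$. $A\Rightarrow B$ means the implication $A\to B$ is valid; $\tau^{-1}$ is $\tau$ with each symbol and its primed counterpart swapped. Proofs: a proof of $\Pi$ in a system is a finite tree whose nodes are safety problems (possibly over different vocabularies), whose root is $\Pi$, and in which each node together with its children is an instance of one of the system's rules, with side conditions valid. $\mathbf{FBPI}$ has the rules (for a safety problem over vocabulary $\Sigma$, $\varphi$ ranging over closed formulas over $\Sigma$ in the first four): (Ind): no premises; conclusion $(\iota,\tau,\neg\varphi)$; side conditions $\iota\Rightarrow\varphi$ and $\varphi\wedge\tau\Rightarrow\varphi'$. (Cons): premise $(\iota,\tau,\neg\varphi)$; conclusion $(\iota,\tau,\beta)$;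 side condition $\varphi\Rightarrow\neg\beta$. (Inc): premises $(\iota,\tau,\neg\varphi)$ and $(\iota\wedge\varphi,\ \tau\wedge\varphi\wedge\varphi',\ \beta\wedge\varphi)$; conclusion $(\iota,\tau,\beta)$. (Rev): premise $(\beta,\tau^{-1},\iota)$; conclusion $(\iota,\tau,\beta)$. (Proph): for $\Pi=(\iota,\tau,\beta)$ over $\Sigma$, a fresh constant symbol $w$, a fresh unary relation symbol $m$, and a formula $\varphi(x)$ over $\Sigma$ with free variable $x$: premises $\Pi^{\mathrm{sound}}_\varphi$ and $\Pi^w_\varphi$; conclusion $\Pi$. Here $\varphi(w)$ is $\varphi$ with $x$ replaced by $w$, $\Pi^w_\varphi=\big(\iota\wedge\varphi(w),\ \varphi(w)\wedge\tau\wedge w'=w\wedge(\varphi(w))',\ \beta\wedge\varphi(w)\big)$ over $\Sigma\cup\{w\}$, and $\Pi^{\mathrm{sound}}_\varphi=\big(\iota\wedge\forall x.\,\varphi(x)\to m(x),\ \tau\wedge\forall x.\,(m(x)\wedge\varphi(x)\wedge\varphi'(x))\to m'(x),\ \beta\wedge\forall x.\,\varphi(x)\to\neg m(x)\big)$ over $\Sigma\cup\{m\}$. *)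

From Stdlib Require Import Arith.
From Stdlib Require Fin.


Record vocab : Type := Vocab {
  fsym : nat -> Type;
  rsym : nat -> Type
}.

(* Disjoint union of vocabularies. [vplus V V] is  Sigma ⊎ Sigma'  with
   [inl] = unprimed symbols and [inr] = primed symbols. *)
Definition vplus (V W : vocab) : vocab :=
  Vocab (fun n => (fsym V n + fsym W n)%type) (fun n => (rsym V n + rsym W n)%type).

Definition vconst : vocab :=
  Vocab (fun n => match n with 0 => unit | _ => Empty_set end) (fun _ => Empty_set).

Definition vunrel : vocab :=
  Vocab (fun _ => Empty_set) (fun n => match n with 1 => unit | _ => Empty_set end).

Inductive term (V : vocab) : Type :=
| Var : nat -> term V
| App : forall n, fsym V n -> (Fin.t n -> term V) -> term V.

Inductive form (V : vocab) : Type :=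
| FFalse : form V
| FTrue : form V
| FEq : term V -> term V -> form V
| FRel : forall n, rsym V n -> (Fin.t n -> term V) -> form V
| FNot : form V -> form V
| FAnd : form V -> form V -> form V
| FOr : form V -> form V -> form V
| FImp : form V -> form V -> form V
| FAll : nat -> form V -> form V
| FEx : nat -> form V -> form V.

Arguments Var {V}.
Arguments App {V} n _ _.
Arguments FEq {V}.
Arguments FRel {V} n _ _.
Arguments FNot {V}.
Arguments FAnd {V}.
Arguments FOr {V}.
Arguments FImp {V}.
Arguments FAll {V}.
Arguments FEx {V}.
Arguments FFalse {V}.
Arguments FTrue {V}.

Fixpoint tfree {V : vocab} (x : nat) (t : term V) : Prop :=
  match t with
  | Var y => x = y
  | App _ _ a => exists i, tfree x (a i)
  end.

Fixpoint ffree {V : vocab} (x : nat) (p : form V) : Prop :=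
  match p with
  | FFalse | FTrue => False
  | FEq t1 t2 => tfree x t1 \/ tfree x t2
  | FRel _ _ a => exists i, tfree x (a i)
  | FNot q => ffree x q
  | FAnd q r | FOr q r | FImp q r => ffree x q \/ ffree x r
  | FAll y q | FEx y q => x <> y /\ ffree x q
  end.

Definition closed {V : vocab} (p : form V) : Prop := forall x, ~ ffree x p.

Definition only_free {V : vocab} (x : nat) (p : form V) : Prop :=
  forall y, ffree y p -> y = x.

(* substitution of a (closed) term c for the free occurrences of x *)
Fixpoint tsubst {V : vocab} (x : nat) (c : term V) (t : term V) : term V :=
  match t with
  | Var y => if Nat.eqb x y then c else Var y
  | App n f a => App n f (fun i => tsubst x c (a i))
  end.

Fixpoint fsubst {V : vocab} (x : nat) (c : term V) (p : form V) : form V :=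
  match p with
  | FFalse => FFalse
  | FTrue => FTrue
  | FEq t1 t2 => FEq (tsubst x c t1) (tsubst x c t2)
  | FRel n r a => FRel n r (fun i => tsubst x c (a i))
  | FNot q => FNot (fsubst x c q)
  | FAnd q r => FAnd (fsubst x c q) (fsubst x c r)
  | FOr q r => FOr (fsubst x c q) (fsubst x c r)
  | FImp q r => FImp (fsubst x c q) (fsubst x c r)
  | FAll y q => if Nat.eqb x y then FAll y q else FAll y (fsubst x c q)
  | FEx y q => if Nat.eqb x y then FEx y q else FEx y (fsubst x c q)
  end.

Record vmap (V W : vocab) : Type := VMap {
  mapf : forall n, fsym V n -> fsym W n;
  mapr : forall n, rsym V n -> rsym W n
}.
Arguments VMap {V W} _ _.
Arguments mapf {V W} _ n _.
Arguments mapr {V W} _ n _.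

Fixpoint tren {V W : vocab} (m : vmap V W) (t : term V) : term W :=
  match t with
  | Var y => Var y
  | App n f a => App n (mapf m n f) (fun i => tren m (a i))
  end.

Fixpoint fren {V W : vocab} (m : vmap V W) (p : form V) : form W :=
  match p with
  | FFalse => FFalse
  | FTrue => FTrue
  | FEq t1 t2 => FEq (tren m t1) (tren m t2)
  | FRel n r a => FRel n (mapr m n r) (fun i => tren m (a i))
  | FNot q => FNot (fren m q)
  | FAnd q r => FAnd (fren m q) (fren m r)
  | FOr q r => FOr (fren m q) (fren m r)
  | FImp q r => FImp (fren m q) (fren m r)
  | FAll y q => FAll y (fren m q)
  | FEx y q => FEx y (fren m q)
  end.

Definition vinl V W : vmap V (vplus V W) :=
  @VMap V (vplus V W) (fun n (f : fsym V n) => (inl f : fsym (vplus V W) n))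
                      (fun n (r : rsym V n) => (inl r : rsym (vplus V W) n)).
Definition vinr V W : vmap W (vplus V W) :=
  @VMap W (vplus V W) (fun n (f : fsym W n) => (inr f : fsym (vplus V W) n))
                      (fun n (r : rsym W n) => (inr r : rsym (vplus V W) n)).
Definition vswap V : vmap (vplus V V) (vplus V V) :=
  @VMap (vplus V V) (vplus V V)
       (fun n (f : fsym (vplus V V) n) => (match f with inl g => inr g | inr g => inl g end : fsym (vplus V V) n))
       (fun n (r : rsym (vplus V V) n) => (match r with inl g => inr g | inr g => inl g end : rsym (vplus V V) n)).
Arguments vinl : clear implicits.
Arguments vinr : clear implicits.
Arguments vswap : clear implicits.
Definition vpair {V W : vocab} (m : vmap V W) : vmap (vplus V V) (vplus W W) :=
  @VMap (vplus V V) (vplus W W)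
       (fun n (f : fsym (vplus V V) n) => (match f with inl g => inl (mapf m n g) | inr g => inr (mapf m n g) end : fsym (vplus W W) n))
       (fun n (r : rsym (vplus V V) n) => (match r with inl g => inl (mapr m n g) | inr g => inr (mapr m n g) end : rsym (vplus W W) n)).

Definition unprimed {V : vocab} (p : form V) : form (vplus V V) := fren (vinl V V) p.
Definition primed {V : vocab} (p : form V) : form (vplus V V) := fren (vinr V V) p.
Definition tinv {V : vocab} (t : form (vplus V V)) : form (vplus V V) := fren (vswap V) t.

Record structure (V : vocab) (D : Type) : Type := Struct {
  ifun : forall n, fsym V n -> (Fin.t n -> D) -> D;
  irel : forall n, rsym V n -> (Fin.t n -> D) -> Prop
}.
Arguments ifun {V D} _ n _ _.
Arguments irel {V D} _ n _ _.

Definition upd {D : Type} (e : nat -> D) (x : nat) (d : D) : nat -> D :=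
  fun y => if Nat.eqb x y then d else e y.

Fixpoint eval {V : vocab} {D : Type} (s : structure V D) (e : nat -> D) (t : term V) : D :=
  match t with
  | Var y => e y
  | App n f a => ifun s n f (fun i => eval s e (a i))
  end.

Fixpoint sat {V : vocab} {D : Type} (s : structure V D) (e : nat -> D) (p : form V) : Prop :=
  match p with
  | FFalse => False
  | FTrue => True
  | FEq t1 t2 => eval s e t1 = eval s e t2
  | FRel n r a => irel s n r (fun i => eval s e (a i))
  | FNot q => ~ sat s e q
  | FAnd q r => sat s e q /\ sat s e r
  | FOr q r => sat s e q \/ sat s e r
  | FImp q r => sat s e q -> sat s e r
  | FAll y q => forall d : D, sat s (upd e y d) q
  | FEx y q => exists d : D, sat s (upd e y d) q
  end.

Definition models {V : vocab} {D : Type} (s : structure V D) (p : form V) : Prop :=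
  forall e : nat -> D, sat s e p.

Definition valid {V : vocab} (p : form V) : Prop :=
  forall (D : Type), inhabited D -> forall (s : structure V D), models s p.

Definition entails {V : vocab} (a b : form V) : Prop := valid (FImp a b).

Definition pairS {V : vocab} {D : Type} (s t : structure V D) : structure (vplus V V) D :=
  Struct (vplus V V) D
    (fun n f => match f with inl g => ifun s n g | inr g => ifun t n g end)
    (fun n r => match r with inl g => irel s n g | inr g => irel t n g end).

Record sproblem (V : vocab) : Type := SP {
  sp_init : form V;
  sp_trans : form (vplus V V);
  sp_bad : form V
}.
Arguments SP {V} _ _ _.
Arguments sp_init {V} _.
Arguments sp_trans {V} _.
Arguments sp_bad {V} _.

Definition is_sproblem {V : vocab} (P : sproblem V) : Prop :=
  closed (sp_init P) /\ closed (sp_trans P) /\ closed (sp_bad P).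

Definition is_transition {V : vocab} {D : Type} (tau : form (vplus V V)) (s t : structure V D) : Prop :=
  models (pairS s t) tau.

Definition safe {V : vocab} (P : sproblem V) : Prop :=
  ~ exists (D : Type) (_ : inhabited D) (k : nat) (s : nat -> structure V D),
      models (s 0) (sp_init P) /\ models (s k) (sp_bad P) /\
      (forall i, i < k -> is_transition (sp_trans P) (s i) (s (S i))).

Definition wconst V : term (vplus V vconst) :=
  @App (vplus V vconst) 0 (inr tt) (Fin.case0 (fun _ => term (vplus V vconst))).

Definition matom V (x : nat) : form (vplus V vunrel) :=
  @FRel (vplus V vunrel) 1 (inr tt) (fun _ => Var x).

Definition proph_w {V : vocab} (P : sproblem V) (x : nat) (phi : form V) : sproblem (vplus V vconst) :=
  let Vw := vplus V vconst in
  let phiw : form Vw := fsubst x (wconst V) (fren (vinl V vconst) phi) in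
  SP (FAnd (fren (vinl V vconst) (sp_init P)) phiw)
     (FAnd (FAnd (FAnd (unprimed phiw) (fren (vpair (vinl V vconst)) (sp_trans P)))
                 (FEq (tren (vinr Vw Vw) (wconst V)) (tren (vinl Vw Vw) (wconst V))))
           (primed phiw))
     (FAnd (fren (vinl V vconst) (sp_bad P)) phiw).

Definition proph_sound {V : vocab} (P : sproblem V) (x : nat) (phi : form V) : sproblem (vplus V vunrel) :=
  let Vm := vplus V vunrel in
  let phim : form Vm := fren (vinl V vunrel) phi in
  SP (FAnd (fren (vinl V vunrel) (sp_init P)) (FAll x (FImp phim (matom V x))))
     (FAnd (fren (vpair (vinl V vunrel)) (sp_trans P))
           (FAll x (FImp (FAnd (FAnd (unprimed (matom V x)) (unprimed phim)) (primed phim))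
                         (primed (matom V x)))))
     (FAnd (fren (vinl V vunrel) (sp_bad P)) (FAll x (FImp phim (FNot (matom V x))))).

Inductive FBPI_proof : forall {V : vocab}, sproblem V -> Prop :=
| R_Ind : forall V (iota : form V) (tau : form (vplus V V)) (phi : form V),
    is_sproblem (SP iota tau (FNot phi)) ->
    closed phi ->
    entails iota phi ->
    entails (FAnd (unprimed phi) tau) (primed phi) ->
    FBPI_proof (SP iota tau (FNot phi))
| R_Cons : forall V (iota : form V) (tau : form (vplus V V)) (beta phi : form V),
    is_sproblem (SP iota tau beta) ->
    closed phi ->
    entails phi (FNot beta) ->
    FBPI_proof (SP iota tau (FNot phi)) ->
    FBPI_proof (SP iota tau beta)
| R_Inc : forall V (iota : form V) (tau : form (vplus V V)) (beta phi : form V),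
    is_sproblem (SP iota tau beta) ->
    closed phi ->
    FBPI_proof (SP iota tau (FNot phi)) ->
    FBPI_proof (SP (FAnd iota phi) (FAnd (FAnd tau (unprimed phi)) (primed phi)) (FAnd beta phi)) ->
    FBPI_proof (SP iota tau beta)
| R_Rev : forall V (iota : form V) (tau : form (vplus V V)) (beta : form V),
    is_sproblem (SP iota tau beta) ->
    FBPI_proof (SP beta (tinv tau) iota) ->
    FBPI_proof (SP iota tau beta)
| R_Proph : forall V (P : sproblem V) (x : nat) (phi : form V),
    is_sproblem P ->
    only_free x phi ->
    FBPI_proof (proph_sound P x phi) ->
    FBPI_proof (proph_w P x phi) ->
    FBPI_proof P.

From Stdlib Require Import Arith Lia Classical FunctionalExtensionality Setoid ssreflect.

(** Soundness is proved rule by rule: an error trace for the conclusion of a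
    rule yields an error trace, over the same domain, for one of its premises.
    For (Ind) the invariant holds along the whole trace; for (Inc) either
    [phi] fails at some state, and the prefix up to it refutes the first
    premise, or [phi] holds throughout, and the trace itself refutes the
    second; (Rev) reverses the trace.  For (Proph), either some [d] satisfies
    [phi] at every state of the trace, and interpreting [w] as [d] refutes
    [Pi^w], or no [d] does, and interpreting [m] at step [i] as the set of [d]
    satisfying [phi] at all steps [<= i] refutes [Pi^sound]. *)

Section Semantics.

Context {D : Type}.

Lemma upd_same (e : nat -> D) x d : upd e x d x = d.
Proof. by unfold upd; rewrite Nat.eqb_refl. Qed.

Lemma upd_shadow (e : nat -> D) x d d' : upd (upd e x d) x d' = upd e x d'.
Proof.
  apply functional_extensionality => y; unfold upd.
  by case: (Nat.eqb x y).
Qed.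

Lemma upd_comm (e : nat -> D) x y d d' :
  x <> y -> upd (upd e x d) y d' = upd (upd e y d') x d.
Proof.
  move=> Hxy; apply functional_extensionality => z; unfold upd.
  case: (Nat.eqb_spec y z); case: (Nat.eqb_spec x z) => //; congruence.
Qed.

Definition reduct {V W : vocab} (m : vmap V W) (s : structure W D) (t : structure V D) : Prop :=
  (forall n f a, ifun s n (mapf m n f) a = ifun t n f a) /\
  (forall n r a, irel s n (mapr m n r) a <-> irel t n r a).

Lemma eval_tren {V W : vocab} {m : vmap V W} {s t} :
  reduct m s t -> forall e u, eval s e (tren m u) = eval t e u.
Proof.
  move=> [Hf _] e; elim=> [y|n f a IH] //=.
  rewrite Hf; f_equal; exact: functional_extensionality.
Qed.

Lemma sat_fren {V W : vocab} {m : vmap V W} {s t} :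
  reduct m s t -> forall p e, sat s e (fren m p) <-> sat t e p.
Proof.
  move=> Hst; have Hev := eval_tren Hst.
  elim=> [||u1 u2|n r a|p IH|p IHp q IHq|p IHp q IHq|p IHp q IHq|y p IH|y p IH] e /=;
    try tauto.
  - by rewrite !Hev.
  - have -> : (fun i => eval s e (tren m (a i))) = (fun i => eval t e (a i))
      by apply functional_extensionality => i; apply Hev.
    exact: (proj2 Hst).
  - by rewrite IH.
  - by rewrite IHp IHq.
  - by rewrite IHp IHq.
  - by rewrite IHp IHq.
  - by setoid_rewrite IH.
  - by setoid_rewrite IH.
Qed.

Definition sum_struct {V W : vocab} (A : structure V D) (B : structure W D) :
    structure (vplus V W) D :=
  Struct (vplus V W) D
    (fun n f => match f with inl g => ifun A n g | inr g => ifun B n g end)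
    (fun n r => match r with inl g => irel A n g | inr g => irel B n g end).

Lemma reduct_inl {V W : vocab} (A : structure V D) (B : structure W D) :
  reduct (vinl V W) (sum_struct A B) A.
Proof. by split. Qed.

Lemma reduct_inr {V W : vocab} (A : structure V D) (B : structure W D) :
  reduct (vinr V W) (sum_struct A B) B.
Proof. by split. Qed.

Lemma reduct_vswap {V : vocab} (A B : structure V D) :
  reduct (vswap V) (pairS A B) (pairS B A).
Proof. by split=> n [] g. Qed.

Lemma reduct_vpair {V W : vocab} (m : vmap V W) A A' B B' :
  reduct m A B -> reduct m A' B' -> reduct (vpair m) (pairS A A') (pairS B B').
Proof. by move=> [Hf Hr] [Hf' Hr']; split=> n [] g /=. Qed.

Lemma sat_unprimed {V : vocab} (A B : structure V D) p e :
  sat (pairS A B) e (unprimed p) <-> sat A e p.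
Proof. exact: sat_fren (reduct_inl A B) p e. Qed.

Lemma sat_primed {V : vocab} (A B : structure V D) p e :
  sat (pairS A B) e (primed p) <-> sat B e p.
Proof. exact: sat_fren (reduct_inr A B) p e. Qed.

Lemma sat_tinv {V : vocab} (A B : structure V D) p e :
  sat (pairS A B) e (tinv p) <-> sat (pairS B A) e p.
Proof. exact: sat_fren (reduct_vswap A B) p e. Qed.

Lemma eval_agree {V : vocab} (s : structure V D) (t : term V) e1 e2 :
  (forall y, tfree y t -> e1 y = e2 y) -> eval s e1 t = eval s e2 t.
Proof.
  elim: t e1 e2 => [y|n f a IH] e1 e2 /= H; first exact: H.
  f_equal; apply functional_extensionality => i.
  by apply: IH => y Hy; apply: H; exists i.
Qed.

Lemma sat_agree {V : vocab} (s : structure V D) (p : form V) e1 e2 :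
  (forall y, ffree y p -> e1 y = e2 y) -> (sat s e1 p <-> sat s e2 p).
Proof.
  elim: p e1 e2 =>
    [||u1 u2|n r a|p IH|p IHp q IHq|p IHp q IHq|p IHp q IHq|y p IH|y p IH] e1 e2 /= H;
    try tauto.
  - by rewrite (eval_agree s u1 e1 e2 (fun z Hz => H z (or_introl Hz)))
               (eval_agree s u2 e1 e2 (fun z Hz => H z (or_intror Hz))).
  - have -> : (fun i => eval s e1 (a i)) = (fun i => eval s e2 (a i)) by
      apply functional_extensionality => i; apply: eval_agree => z Hz; apply: H; exists i.
    by [].
  - by rewrite (IH e1 e2).
  - by rewrite (IHp e1 e2 (fun z Hz => H z (or_introl Hz)))
               (IHq e1 e2 (fun z Hz => H z (or_intror Hz))).
  - by rewrite (IHp e1 e2 (fun z Hz => H z (or_introl Hz)))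
               (IHq e1 e2 (fun z Hz => H z (or_intror Hz))).
  - by rewrite (IHp e1 e2 (fun z Hz => H z (or_introl Hz)))
               (IHq e1 e2 (fun z Hz => H z (or_intror Hz))).
  - have Hd d : sat s (upd e1 y d) p <-> sat s (upd e2 y d) p.
      by apply: IH => z Hz; unfold upd; case: (Nat.eqb_spec y z) => // Hyz; apply: H; split; auto.
    by setoid_rewrite Hd.
  - have Hd d : sat s (upd e1 y d) p <-> sat s (upd e2 y d) p.
      by apply: IH => z Hz; unfold upd; case: (Nat.eqb_spec y z) => // Hyz; apply: H; split; auto.
    by setoid_rewrite Hd.
Qed.

Lemma sat_closed {V : vocab} (s : structure V D) (p : form V) e1 e2 :
  closed p -> (sat s e1 p <-> sat s e2 p).
Proof. by move=> Hp; apply: sat_agree => y /Hp. Qed.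

Lemma sat_only_free {V : vocab} (s : structure V D) x (p : form V) e1 e2 d :
  only_free x p -> (sat s (upd e1 x d) p <-> sat s (upd e2 x d) p).
Proof. by move=> Hp; apply: sat_agree => y /Hp ->; rewrite !upd_same. Qed.

Lemma eval_tsubst {V : vocab} (s : structure V D) x c (t : term V) e :
  eval s e (tsubst x c t) = eval s (upd e x (eval s e c)) t.
Proof.
  elim: t => [y|n f a IH] /=; first by unfold upd; case: (Nat.eqb x y).
  f_equal; exact: functional_extensionality.
Qed.

Lemma sat_fsubst {V : vocab} (s : structure V D) x c :
  (forall e1 e2, eval s e1 c = eval s e2 c) ->
  forall p e, sat s e (fsubst x c p) <-> sat s (upd e x (eval s e c)) p.
Proof.
  move=> Hc; elim=>
    [||u1 u2|n r a|p IH|p IHp q IHq|p IHp q IHq|p IHp q IHq|y p IH|y p IH] e /=;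
    try tauto.
  - by rewrite !eval_tsubst.
  - by have -> : (fun i => eval s e (tsubst x c (a i))) =
                 (fun i => eval s (upd e x (eval s e c)) (a i))
      by apply functional_extensionality => i; apply: eval_tsubst.
  - by rewrite IH.
  - by rewrite IHp IHq.
  - by rewrite IHp IHq.
  - by rewrite IHp IHq.
  - case: (Nat.eqb_spec x y) => [<-|Hxy] /=; first by setoid_rewrite upd_shadow.
    setoid_rewrite IH; setoid_rewrite (Hc _ e).
    by setoid_rewrite (upd_comm _ _ _ _ _ (not_eq_sym Hxy)).
  - case: (Nat.eqb_spec x y) => [<-|Hxy] /=; first by setoid_rewrite upd_shadow.
    setoid_rewrite IH; setoid_rewrite (Hc _ e).
    by setoid_rewrite (upd_comm _ _ _ _ _ (not_eq_sym Hxy)).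
Qed.

End Semantics.

Record error_trace {V : vocab} {D : Type} (P : sproblem V) (k : nat)
    (s : nat -> structure V D) : Prop := ErrorTrace {
  trace_init : models (s 0) (sp_init P);
  trace_bad : models (s k) (sp_bad P);
  trace_step : forall i, i < k -> is_transition (sp_trans P) (s i) (s (S i))
}.

Lemma safeP {V : vocab} (P : sproblem V) :
  safe P <-> forall D (s : nat -> structure V D) k, inhabited D -> ~ error_trace P k s.
Proof.
  split=> [HP D s k HD [H0 Hk Hs] | HP [D [HD [k [s [H0 [Hk Hs]]]]]]].
  - by apply: HP; exists D, HD, k, s.
  - by apply: (HP D s k HD); split.
Qed.

Lemma inductive_invariant {V : vocab} {D : Type} (iota : form V) tau phi
    (s : nat -> structure V D) k :
  inhabited D -> entails iota phi -> entails (FAnd (unprimed phi) tau) (primed phi) ->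
  models (s 0) iota -> (forall i, i < k -> is_transition tau (s i) (s (S i))) ->
  forall i, i <= k -> models (s i) phi.
Proof.
  move=> HD Hinit Hstep H0 Hs; elim=> [|i IH] Hik e; first exact: (Hinit D HD (s 0) e (H0 e)).
  apply/(sat_primed (s i)); apply: (Hstep D HD _ e); split.
  - by apply/sat_unprimed; apply: IH; lia.
  - by apply: Hs; lia.
Qed.

Lemma safe_Ind {V : vocab} (iota : form V) tau phi :
  entails iota phi -> entails (FAnd (unprimed phi) tau) (primed phi) ->
  safe (SP iota tau (FNot phi)).
Proof.
  move=> Hinit Hstep; apply/safeP => D s k [d] [H0 Hk Hs].
  have Hinv := inductive_invariant iota tau phi s k (inhabits d) Hinit Hstep H0 Hs.
  exact: (Hk (fun _ => d) (Hinv k (le_n k) _)).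
Qed.

Lemma safe_Cons {V : vocab} (iota : form V) tau beta phi :
  entails phi (FNot beta) -> safe (SP iota tau (FNot phi)) -> safe (SP iota tau beta).
Proof.
  move=> Hphi /safeP Hsafe; apply/safeP => D s k HD [H0 Hk Hs].
  apply: (Hsafe D s k HD); split=> // e He.
  by case: HD => d; apply: (Hphi D (inhabits d) (s k) e He); apply: Hk.
Qed.

Lemma safe_Inc {V : vocab} (iota : form V) tau beta phi :
  closed phi ->
  safe (SP iota tau (FNot phi)) ->
  safe (SP (FAnd iota phi) (FAnd (FAnd tau (unprimed phi)) (primed phi)) (FAnd beta phi)) ->
  safe (SP iota tau beta).
Proof.
  move=> Hphi /safeP Hviol /safeP Hstr; apply/safeP => D s k HD [H0 Hk Hs].
  case: (classic (exists j, j <= k /\ ~ models (s j) phi)) => [[j [Hjk Hj]] | Hnone].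
  - apply: (Hviol D s j HD); split.
    + exact: H0.
    + by move=> e He; apply: Hj => e'; apply/(sat_closed _ _ e' e Hphi).
    + by move=> i Hij; apply: Hs; lia.
  - have Hall j : j <= k -> models (s j) phi.
      by move=> Hjk; apply: NNPP => Hj; apply: Hnone; exists j.
    apply: (Hstr D s k HD); split=> [e|e|i Hik e] /=.
    + by split; [apply: H0 | apply: Hall; lia].
    + by split; [apply: Hk | apply: Hall].
    + split; first split.
      * exact: Hs.
      * by apply/sat_unprimed; apply: Hall; lia.
      * by apply/sat_primed; apply: Hall; lia.
Qed.

Lemma safe_Rev {V : vocab} (iota : form V) tau beta :
  safe (SP beta (tinv tau) iota) -> safe (SP iota tau beta).
Proof.
  move=> /safeP Hsafe; apply/safeP => D s k HD [H0 Hk Hs].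
  apply: (Hsafe D (fun i => s (k - i)) k HD); split=> /=.
  - by rewrite Nat.sub_0_r.
  - by rewrite Nat.sub_diag.
  - move=> i Hik e; apply/sat_tinv.
    by rewrite (_ : k - i = S (k - S i)); [lia | apply: Hs; lia].
Qed.

Section Prophecy.

Context {V : vocab} {D : Type} (x : nat) (phi : form V).

Definition const_struct (d : D) : structure vconst D :=
  Struct vconst D (fun _ _ _ => d) (fun _ _ _ => False).

(** The only relation symbol of [vunrel] is unary, so quantifying over its
    argument positions just reads off its argument. *)
Definition unrel_struct (M : D -> Prop) : structure vunrel D :=
  Struct vunrel D (fun n f => match f with end) (fun _ _ a => forall z, M (a z)).

Definition models_at (A : structure V D) (d : D) : Prop :=
  forall e, sat A (upd e x d) phi.

Lemma models_at_of_sat (A : structure V D) e d :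
  only_free x phi -> sat A (upd e x d) phi -> models_at A d.
Proof. by move=> Hphi He e'; apply/(sat_only_free A x phi e' e d Hphi). Qed.

Lemma sat_phi_wconst (A : structure V D) d e :
  sat (sum_struct A (const_struct d)) e (fsubst x (wconst V) (fren (vinl V vconst) phi))
  <-> sat A (upd e x d) phi.
Proof.
  rewrite (sat_fsubst (sum_struct A (const_struct d)) x (wconst V) (fun _ _ => eq_refl d)).
  exact: sat_fren (reduct_inl A (const_struct d)) phi _.
Qed.

Lemma sat_matom (A : structure V D) M e :
  sat (sum_struct A (unrel_struct M)) e (matom V x) <-> M (e x).
Proof. by split=> [H | H _]; [apply: (H Fin.F1) | exact: H]. Qed.

Context (P : sproblem V) (k : nat) (s : nat -> structure V D).

Lemma reduct_pair_sum {W : vocab} i (B B' : structure W D) :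
  reduct (vpair (vinl V W)) (pairS (sum_struct (s i) B) (sum_struct (s (S i)) B'))
    (pairS (s i) (s (S i))).
Proof. exact: reduct_vpair (reduct_inl _ _) (reduct_inl _ _). Qed.

Definition phi_upto (i : nat) (d : D) : Prop := forall j, j <= i -> models_at (s j) d.

Lemma error_trace_proph_w d :
  error_trace P k s -> phi_upto k d ->
  error_trace (proph_w P x phi) k (fun i => sum_struct (s i) (const_struct d)).
Proof.
  move=> [H0 Hk Hs] Hd; split=> [e|e|i Hik e].
  - split; first exact/(sat_fren (reduct_inl _ _)).
    by apply/sat_phi_wconst; apply: Hd; lia.
  - split; first exact/(sat_fren (reduct_inl _ _)).
    by apply/sat_phi_wconst; apply: Hd.
  - split; first split; first split.
    + by apply/sat_unprimed/sat_phi_wconst; apply: Hd; lia.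
    + by apply/(sat_fren (reduct_pair_sum _ _ _)); apply: Hs.
    + by [].
    + by apply/sat_primed/sat_phi_wconst; apply: Hd; lia.
Qed.

Lemma error_trace_proph_sound :
  only_free x phi -> error_trace P k s -> ~ (exists d, phi_upto k d) ->
  error_trace (proph_sound P x phi) k (fun i => sum_struct (s i) (unrel_struct (phi_upto i))).
Proof.
  move=> Hphi [H0 Hk Hs] Hnone; split=> [e|e|i Hik e].
  - split; first exact/(sat_fren (reduct_inl _ _)).
    move=> d /(sat_fren (reduct_inl _ _)) Hd; apply/sat_matom; rewrite upd_same.
    move=> j Hj; rewrite (_ : j = 0); first lia.
    exact: models_at_of_sat Hphi Hd.
  - split; first exact/(sat_fren (reduct_inl _ _)).
    move=> d _ /sat_matom; rewrite upd_same => Hd.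
    by apply: Hnone; exists d.
  - split; first by apply/(sat_fren (reduct_pair_sum _ _ _)); apply: Hs.
    intros d [[Hm _] Hd].
    move: Hm Hd => /sat_unprimed/sat_matom Hm /sat_primed/(sat_fren (reduct_inl _ _)) Hd.
    apply/sat_primed/sat_matom; rewrite upd_same in Hm *.
    move=> j Hj; case: (Nat.eq_dec j (S i)) => [-> | Hji].
    + exact: models_at_of_sat Hphi Hd.
    + by apply: Hm; lia.
Qed.

End Prophecy.

Lemma safe_Proph {V : vocab} (P : sproblem V) x phi :
  only_free x phi -> safe (proph_sound P x phi) -> safe (proph_w P x phi) -> safe P.
Proof.
  move=> Hphi /safeP Hsound /safeP Hw; apply/safeP => D s k HD Htr.
  case: (classic (exists d, phi_upto x phi s k d)) => [[d Hd] | Hnone].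
  - exact: (Hw _ _ _ HD (error_trace_proph_w _ _ _ _ _ _ Htr Hd)).
  - exact: (Hsound _ _ _ HD (error_trace_proph_sound _ _ _ _ _ Hphi Htr Hnone)).
Qed.

Lemma FBPI_sound {V : vocab} (P : sproblem V) : FBPI_proof P -> safe P.
Proof.
  elim=> {V P}.
  - by move=> V iota tau phi _ _ Hinit Hstep; apply: safe_Ind.
  - by move=> V iota tau beta phi _ _ Hphi _ Hsafe; apply: safe_Cons Hsafe.
  - by move=> V iota tau beta phi _ Hphi _ Hviol _ Hstr; apply: safe_Inc Hviol Hstr.
  - by move=> V iota tau beta _ _ Hsafe; apply: safe_Rev.
  - by move=> V P x phi _ Hphi _ Hsound _ Hw; apply: safe_Proph Hsound Hw.
Qed.

Theorem theorem5p4 (V : vocab) (P : sproblem V) :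
  is_sproblem P -> FBPI_proof P -> safe P.
Proof. by move=> _; apply: FBPI_sound. Qed.
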